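(* Let $F$ be a graph on $\binom{n}{k}$ vertices with $k=n/2$, and let $\mathcal{R}$ be a $k$-reconstruction family of $F$. Then $\overline{\mathcal{R}}=\{V(F)\setminus X:X\in\mathcal{R}\}$ is a $k$-reconstruction family of $F$.
   Context: For a graph $F$ on $\binom{n}{k}$ vertices and a family $\mathcal{R}$ of subsets of $V(F)$, let $S_{\mathcal{R}}(A)=\{X\in\mathcal{R}:A\in X\}$ for $A\in V(F)$. $\mathcal{R}$ is a $k$-reconstruction family of $F$ if (1) $|X|=\binom{n-1}{k-1}$ for all $X\in\mathcal{R}$; (2) $|S_{\mathcal{R}}(A)|=k$ for all $A\in V(F)$; (3) for every edge $AB$ of $F$, $|S_{\mathcal{R}}(A)\cap S_{\mathcal{R}}(B)|=k-1$. *)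

From mathcomp Require Import all_boot.
Set Implicit Arguments. Unset Strict Implicit. Unset Printing Implicit Defensive.

Definition simple_graph (T : finType) (F : rel T) : Prop :=
  symmetric F /\ irreflexive F.

Definition S_R (T : finType) (R : {set {set T}}) (A : T) : {set {set T}} :=
  [set X in R | A \in X].

Definition reconstruction_family (T : finType) (n k : nat) (F : rel T)
    (R : {set {set T}}) : Prop :=
  [/\ (forall X, X \in R -> #|X| = 'C(n.-1, k.-1)),
      (forall A : T, #|S_R R A| = k)
    & (forall A B : T, F A B -> #|S_R R A :&: S_R R B| = k.-1)].

Definition compl_family (T : finType) (R : {set {set T}}) : {set {set T}} :=
  [set ~: X | X in R].

From mathcomp Require Import all_boot.
From mathcomp Require Import zify.

(* Complementation is a bijection of {set T}, so S_{R̄}(A) is the image of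
   R \ S_R(A); together with |R| = n this turns each condition on R̄ into the
   matching condition on R. Double counting the incidences A ∈ X ∈ R gives
   |R| C(n-1,k-1) = k C(n,k) = n C(n-1,k-1), i.e. |R| = n, and for n = 2k the
   identity C(2k,k) = 2 C(2k-1,k-1) gives |V(F) \ X| = C(n-1,k-1). *)

Section ComplementedFamily.

Context {T : finType}.

Lemma card_compl_family (P : {set {set T}}) : #|compl_family P| = #|P|.
Proof. by rewrite card_imset //; exact: setC_inj. Qed.

Lemma compl_familyI (P Q : {set {set T}}) :
  compl_family (P :&: Q) = compl_family P :&: compl_family Q.
Proof. by rewrite /compl_family imsetI // => X Y _ _; exact: setC_inj. Qed.

Variable R : {set {set T}}.

Lemma S_R_sub (A : T) : S_R R A \subset R.
Proof. by apply/subsetP => X; rewrite inE => /andP[]. Qed.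

Lemma S_R_compl_family (A : T) :
  S_R (compl_family R) A = compl_family (R :\: S_R R A).
Proof.
apply/setP => Y; rewrite -(setCK Y) inE !mem_imset //; try exact: setC_inj.
by rewrite !inE; case: (~: Y \in R); case: (A \in Y).
Qed.

Lemma card_S_R_compl_family (A : T) :
  #|S_R (compl_family R) A| = #|R| - #|S_R R A|.
Proof.
by rewrite S_R_compl_family card_compl_family cardsD (setIidPr (S_R_sub A)).
Qed.

Lemma card_S_R_compl_familyI (A B : T) :
  #|S_R (compl_family R) A :&: S_R (compl_family R) B| =
  #|R| - #|S_R R A :|: S_R R B|.
Proof.
rewrite !S_R_compl_family -compl_familyI card_compl_family -setDUr cardsD.
by rewrite (setIidPr _) // subUset !S_R_sub.
Qed.

Lemma sum_card_S_R : \sum_(A : T) #|S_R R A| = \sum_(X in R) #|X|.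
Proof.
transitivity (\sum_(A : T) \sum_(X in R) (A \in X : nat)).
  apply: eq_bigr => A _; rewrite -sum1_card big_mkcond [RHS]big_mkcond /=.
  by apply: eq_bigr => X _; rewrite inE; case: (X \in R); case: (A \in X).
rewrite exchange_big; apply: eq_bigr => X _.
by rewrite -sum1_card [RHS]big_mkcond.
Qed.

End ComplementedFamily.

Lemma card_reconstruction_family (T : finType) (n k : nat) (F : rel T)
    (R : {set {set T}}) :
  reconstruction_family n k F R -> #|T| = 'C(n, k) ->
  k <= n -> (k == 0) = (n == 0) -> #|R| = n.
Proof.
move=> [cardX cardS _] cardT le_kn k0_n0.
have := sum_card_S_R R.
rewrite (eq_bigr _ (fun A _ => cardS A)) (eq_bigr _ (fun X XR => cardX X XR)).
rewrite !sum_nat_const cardT {cardX cardS cardT}.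
case: k le_kn k0_n0 => [|k] le_kn k0_n0.
  have -> : n = 0 by case: n k0_n0 {le_kn}.
  by rewrite muln0 muln1.
have binn1_gt0 : 0 < 'C(n.-1, k) by rewrite bin_gt0; lia.
by rewrite mulnC -mul_bin_diag => /eqP; rewrite eqn_pmul2r // => /eqP.
Qed.

Lemma bin_double_diag (k : nat) :
  0 < k -> 'C(k.*2, k) = 'C(k.*2.-1, k.-1).*2.
Proof.
case: k => // k _; rewrite doubleS binS /= -[RHS]addnn; congr (_ + _).
by rewrite -bin_sub; [congr 'C(_, _); lia | lia].
Qed.

Theorem proposition12 (T : finType) (n k : nat) (F : rel T)
    (R : {set {set T}}) :
  simple_graph F ->
  #|T| = 'C(n, k) ->
  n = k.*2 ->
  reconstruction_family n k F R ->
  reconstruction_family n k F (compl_family R).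
Proof.
move=> _ cardT n_2k familyR.
have cardR : #|R| = n.
  apply: card_reconstruction_family familyR cardT _ _;
  by rewrite n_2k ?double_eq0 //; lia.
case: familyR => cardX cardS cardSI; split.
- move=> _ /imsetP[X XR ->].
  have : 0 < #|R| by apply/card_gt0P; exists X.
  rewrite cardR n_2k double_gt0 => k_gt0.
  have := cardsC X; rewrite cardX // cardT n_2k bin_double_diag //; lia.
- by move=> A; rewrite card_S_R_compl_family cardR cardS n_2k; lia.
- move=> A B FAB.
  by rewrite card_S_R_compl_familyI cardsU cardR !cardS cardSI // n_2k; lia.
Qed.
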